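(* Let $\alpha:\mathscr{F}\to\mathscr{F}'$ be a strict homomorphism of frames with $S=S'$ (and $\alpha$ the identity of $S$), where $\mathscr{F}=(S,I,R,\sigma,\sigma_1)$ and $\mathscr{F}'=(S,I',R',\sigma',\sigma_1')$. Then $R\to R'$ is surjective and $I\subseteq I'$. Moreover, windows $\mathscr{P}$ over $\mathscr{F}$ are equivalent to pairs consisting of a window $\mathscr{P}'=(P',Q',F',F_1')$ over $\mathscr{F}'$ and a direct summand $V$ of the $R$-module $P'/IP'$ lifting the Hodge filtration of $\mathscr{P}'$, via the functor $\mathscr{P}\mapsto(\alpha_*\mathscr{P},Q/IP)$.
   Context: A frame is $(S,I,R,\sigma,\sigma_1)$ with $R=S/I$, $\sigma$ a ring endomorphism, $\sigma_1:I\to S$ $\sigma$-linear, $I+pS\subseteq\mathrm{Rad}(S)$, $\sigma(a)\equiv a^p\bmod pS$, $\sigma_1(I)$ generating $S$. A window is $(P,Q,F,F_1)$ with $P$ a f.g. projective $S$-module, $Q\subseteq P$, $F:P\to P$, $F_1:Q\to P$ $\sigma$-linear, $P=L\oplus T$ with $Q=L\oplus IT$ for some $L,T$, $F_1(ax)=\sigma_1(a)F(x)$ for $a\in I$, $x\in P$, and $F_1(Q)$ generating $P$; morphisms are $S$-linear maps preserving $Q$ and commuting with $F,F_1$. A strict homomorphism of frames is a ring map $\alpha$ with $\alpha(I)\subseteq I'$, $\sigma'\alpha=\alpha\sigma$, $\sigma_1'\alpha=\alpha\sigma_1$; $\alpha_*$ denotes base change of windows (universal window over $\mathscr{F}'$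 receiving a map compatible with $Q$, $F$, $F_1$). The Hodge filtration of $\mathscr{P}'$ is $Q'/I'P'\subseteq P'/I'P'$; a lift of it is a direct summand $V\subseteq P'/IP'$ whose image under $P'/IP'\to P'/I'P'$ equals $Q'/I'P'$. Morphisms of pairs are window morphisms whose induced map on $P'/IP'$ carries $V$ into $V$. *)

From HB Require Import structures.
From mathcomp Require Import all_boot all_order all_algebra.
Set Implicit Arguments. Unset Strict Implicit. Unset Printing Implicit Defensive.
Import GRing.Theory.
Local Open Scope ring_scope.

Definition slin (S : comUnitRingType) (U V : lmodType S) (f : U -> V) : Prop :=
  forall (a : S) (x y : U), f (a *: x + y) = a *: f x + f y.

Definition submod (S : comUnitRingType) (V : lmodType S) (U : V -> Prop) : Prop :=
  U 0 /\ forall (a : S) (x y : V), U x -> U y -> U (a *: x + y).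

Definition is_ideal (S : comUnitRingType) (I : S -> Prop) : Prop :=
  I 0 /\ (forall x y, I x -> I y -> I (x + y)) /\ (forall a x, I x -> I (a * x)).

Definition ideal_mul (S : comUnitRingType) (V : lmodType S)
    (I : S -> Prop) (T : V -> Prop) (x : V) : Prop :=
  exists (n : nat) (a : 'I_n -> S) (t : 'I_n -> V),
    (forall i, I (a i) /\ T (t i)) /\ x = \sum_(i < n) a i *: t i.

Definition in_jacobson (S : comUnitRingType) (x : S) : Prop :=
  forall y : S, (1 - x * y) \is a GRing.unit.

Definition fg_projective (S : comUnitRingType) (P : lmodType S) : Prop :=
  exists (n : nat) (i : P -> 'rV[S]_n) (r : 'rV[S]_n -> P),
    slin i /\ slin r /\ forall x, r (i x) = x.

(* A frame (S, I, R = S/I, sigma, sigma_1) for the fixed prime p.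
   sigma_1 : I -> S is represented by a function S -> S of which only the
   values on I matter. *)
Record frame (S : comUnitRingType) (p : nat) := Frame {
  fI : S -> Prop;
  fsigma : {rmorphism S -> S};
  fsigma1 : S -> S;
  fI_ideal : is_ideal fI;
  fsigma1_lin : forall (a x y : S), fI x -> fI y ->
      fsigma1 (a * x + y) = fsigma a * fsigma1 x + fsigma1 y;
  frad : forall a b : S, fI a -> in_jacobson (a + p%:R * b);
  ffrob : forall a : S, exists b : S, fsigma a - a ^+ p = p%:R * b;
  fgen : exists (n : nat) (c : 'I_n -> S) (x : 'I_n -> S),
      (forall i, fI (x i)) /\ \sum_(i < n) c i * fsigma1 (x i) = 1
}.

Definition strict_id_hom (S : comUnitRingType) (p : nat) (F F' : frame S p) : Prop :=
  (forall a, fI F a -> fI F' a) /\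
  (forall a, fsigma F' a = fsigma F a) /\
  (forall a, fI F a -> fsigma1 F' a = fsigma1 F a).

(* The natural map R = S/I -> R' = S/I' (class of s |-> class of s) is
   well defined (I included in I') and surjective. *)
Definition quot_map_wd_surj (S : comUnitRingType) (I I' : S -> Prop) : Prop :=
  (forall a, I a -> I' a) /\ (forall s' : S, exists s : S, I' (s - s')).

(* A window (P, Q, F, F_1) over the frame Fr.  F_1 : Q -> P is represented
   by a function P -> P of which only the values on Q matter. *)
Record window (S : comUnitRingType) (p : nat) (Fr : frame S p) := Window {
  wP : lmodType S;
  wQ : wP -> Prop;
  wF : wP -> wP;
  wF1 : wP -> wP;
  wP_fgproj : fg_projective wP;
  wF_lin : forall (a : S) (x y : wP),
      wF (a *: x + y) = fsigma Fr a *: wF x + wF y;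
  wF1_lin : forall (a : S) (x y : wP), wQ x -> wQ y ->
      wF1 (a *: x + y) = fsigma Fr a *: wF1 x + wF1 y;
  wdecomp : exists L T : wP -> Prop,
      submod L /\ submod T /\
      (forall x, exists l t, L l /\ T t /\ x = l + t) /\
      (forall l t, L l -> T t -> l + t = 0 -> l = 0 /\ t = 0) /\
      (forall x, wQ x <-> exists l t, L l /\ ideal_mul (fI Fr) T t /\ x = l + t);
  wF1_F : forall (a : S) (x : wP), fI Fr a ->
      wF1 (a *: x) = fsigma1 Fr a *: wF x;
  wF1_gen : forall x : wP, exists (n : nat) (c : 'I_n -> S) (q : 'I_n -> wP),
      (forall i, wQ (q i)) /\ x = \sum_(i < n) c i *: wF1 (q i)
}.

Arguments wQ {S p Fr} w _.
Arguments wF {S p Fr} w _.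
Arguments wF1 {S p Fr} w _.
Arguments wP {S p Fr} w.

(* For
   Fr1 = Fr2 these are exactly the window morphisms; for Fr1 -> Fr2 a strict
   homomorphism with alpha = id these are the maps used to define base
   change alpha_*. *)
Definition wmap (S : comUnitRingType) (p : nat) (Fr1 Fr2 : frame S p)
    (P1 : window Fr1) (P2 : window Fr2) (u : wP P1 -> wP P2) : Prop :=
  slin u /\
  (forall x, wQ P1 x -> wQ P2 (u x)) /\
  (forall x, u (wF P1 x) = wF P2 (u x)) /\
  (forall x, wQ P1 x -> u (wF1 P1 x) = wF1 P2 (u x)).

(* (P', u) is a base change alpha_* P of P along alpha = id : F -> F':
   the universal window over F' receiving a compatible map from P. *)
Definition is_base_change (S : comUnitRingType) (p : nat) (F F' : frame S p)
    (P : window F) (P' : window F') (u : wP P -> wP P') : Prop :=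
  wmap u /\
  forall (P'' : window F') (v : wP P -> wP P''), wmap v ->
    (exists w : wP P' -> wP P'', wmap w /\ forall x, w (u x) = v x) /\
    (forall w1 w2 : wP P' -> wP P'', wmap w1 -> wmap w2 ->
       (forall x, w1 (u x) = v x) -> (forall x, w2 (u x) = v x) ->
       forall y, w1 y = w2 y).

(* Submodules V of P'/IP' are encoded by their preimages W in P'
   (submodules of P' containing IP').
   lifts_hodge I P' W : V = W/IP' is a direct summand of the R-module P'/IP'
   whose image in P'/I'P' equals the Hodge filtration Q'/I'P'. *)
Definition lifts_hodge (S : comUnitRingType) (p : nat) (I : S -> Prop)
    (F' : frame S p) (P' : window F') (W : wP P' -> Prop) : Prop :=
  let IP' := ideal_mul I (fun _ : wP P' => True) in
  let I'P' := ideal_mul (fI F') (fun _ : wP P' => True) in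
  submod W /\ (forall x, IP' x -> W x) /\
  (exists W' : wP P' -> Prop,
      submod W' /\ (forall x, IP' x -> W' x) /\
      (forall x, exists w w', W w /\ W' w' /\ x = w + w') /\
      (forall x, W x -> W' x -> IP' x)) /\
  (forall x, wQ P' x <-> exists w z, W w /\ I'P' z /\ x = w + z).

Definition pair_hom (S : comUnitRingType) (p : nat) (F' : frame S p)
    (P1' P2' : window F') (W1 : wP P1' -> Prop) (W2 : wP P2' -> Prop)
    (g : wP P1' -> wP P2') : Prop :=
  wmap g /\ forall x, W1 x -> W2 (g x).

(* preimage in P' of the image of Q/IP under P/IP -> P'/IP' induced by the
   base change map u : P -> P'; i.e. the pair component "Q/IP" of the functor *)
Definition hodge_image (S : comUnitRingType) (p : nat) (F F' : frame S p)
    (P : window F) (P' : window F') (u : wP P -> wP P') (x : wP P') : Prop :=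
  exists q z, wQ P q /\ ideal_mul (fI F) (fun _ : wP P' => True) z /\ x = u q + z.

Arguments is_base_change {S p F F'} P P' u.
Arguments hodge_image {S p F F'} P {P'} u x.
Arguments lifts_hodge {S p} I {F'} P' W.
Arguments pair_hom {S p F' P1' P2'} W1 W2 g.
Arguments wmap {S p Fr1 Fr2 P1 P2} u.
Arguments strict_id_hom {S p} F F'.

(* Since alpha is the identity of S, a base change of P can be taken on the module P
   itself, with Q' = Q + I'P, F' = F, and F_1' given by F_1 on L and by
   [a t |-> sigma_1'(a) F(t)] on I'T for a normal decomposition P = L + T.  It satisfies
   F_1'(a x) = sigma_1'(a) F(x) for all a in I' because sigma = theta sigma_1' on I'
   and F = theta F_1 on Q.  So every base change is an isomorphism of modules u : P -> P'
   with Q' = u(Q) + I'P', which makes Q/IP a lift of the Hodge filtration and makes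
   the functor fully faithful.  Conversely, a lift W/IP' of Q'/I'P' is the Q of a
   window over F on P' as soon as W has a normal decomposition W = L + IT.  It is
   obtained from a normal decomposition L' + I'T' of Q' by moving L' into W and T'
   into a complement W' of W: the resulting endomorphism of P' is congruent to the
   identity modulo I'P', hence bijective by Nakayama since I' lies in the Jacobson
   radical. *)

From mathcomp Require Import all_boot all_order all_algebra.
From Stdlib Require Import IndefiniteDescription.
Set Implicit Arguments. Unset Strict Implicit. Unset Printing Implicit Defensive.
Import GRing.Theory.
Local Open Scope ring_scope.

Notation ideal_span I V := (@ideal_mul _ V I (fun _ : V => True)).

Section IdealTheory.
Variables (S : comUnitRingType) (I : S -> Prop).
Hypothesis hI : is_ideal I.

Lemma ideal0 : I 0. Proof. exact: hI.1. Qed.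
Lemma idealD x y : I x -> I y -> I (x + y). Proof. exact: hI.2.1. Qed.
Lemma idealMl a x : I x -> I (a * x). Proof. exact: hI.2.2. Qed.
Lemma idealMr a x : I x -> I (x * a). Proof. by rewrite mulrC; apply: idealMl. Qed.
Lemma idealN x : I x -> I (- x). Proof. by rewrite -mulN1r; apply: idealMl. Qed.
Lemma ideal_sum n (f : 'I_n -> S) : (forall k, I (f k)) -> I (\sum_k f k).
Proof. by move=> h; elim/big_ind: _ => //; [exact: ideal0 | exact: idealD]. Qed.
End IdealTheory.

Lemma det_cong_ideal (S : comUnitRingType) (J : S -> Prop) (hJ : is_ideal J) m
    (A B : 'M[S]_m) :
  (forall j k, J (A j k - B j k)) -> J (\det A - \det B).
Proof.
pose cong (a b : S) := J (a - b).
have cong_add x1 x2 y1 y2 : cong x1 x2 -> cong y1 y2 -> cong (x1 + y1) (x2 + y2).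
  by rewrite /cong opprD addrACA; exact: (idealD hJ).
have cong_mul x1 x2 y1 y2 : cong x1 x2 -> cong y1 y2 -> cong (x1 * y1) (x2 * y2).
  rewrite /cong => h1 h2; rewrite -[x1 * y1](subrK (x1 * y2)) -addrA -mulrBr -mulrBl.
  by apply: (idealD hJ); [apply: idealMl | apply: idealMr].
have cong_refl x : cong x x by rewrite /cong subrr; exact: (ideal0 hJ).
move=> hAB; suff : cong (\det A) (\det B) by [].
rewrite /determinant; apply: (big_ind2 cong) => [|x1 x2 y1 y2|s _].
- exact: cong_refl.
- exact: cong_add.
apply: (cong_mul); first exact: cong_refl.
apply: (big_ind2 cong) => [|x1 x2 y1 y2|j _]; [exact: cong_refl | exact: cong_mul | exact: hAB].
Qed.

Lemma is_ideal_total (S : comUnitRingType) : is_ideal (fun _ : S => True).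
Proof. by []. Qed.

Section SemilinearTheory.
Variables (S : comUnitRingType) (U V : lmodType S) (f : U -> V).
Hypothesis hf : slin f.

Lemma slinD x y : f (x + y) = f x + f y.
Proof. by have := hf 1 x y; rewrite !scale1r. Qed.
Lemma slin0 : f 0 = 0.
Proof. by apply: (@addIr _ (f 0)); rewrite -slinD !add0r. Qed.
Lemma slinZ a x : f (a *: x) = a *: f x.
Proof. by have := hf a x 0; rewrite !addr0 slin0 addr0. Qed.
Lemma slinN x : f (- x) = - f x.
Proof. by rewrite -scaleN1r slinZ scaleN1r. Qed.
Lemma slinB x y : f (x - y) = f x - f y.
Proof. by rewrite slinD slinN. Qed.
Lemma slin_sum n (g : 'I_n -> U) : f (\sum_k g k) = \sum_k f (g k).
Proof. exact: (big_morph f slinD slin0). Qed.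
End SemilinearTheory.

Lemma slin_id (S : comUnitRingType) (U : lmodType S) : slin (@id U).
Proof. by []. Qed.

Lemma slin_comp (S : comUnitRingType) (U V X : lmodType S) (f : U -> V) (g : V -> X) :
  slin f -> slin g -> slin (g \o f).
Proof. by move=> hf hg a x y /=; rewrite hf hg. Qed.

Section SubmoduleTheory.
Variables (S : comUnitRingType) (V : lmodType S) (U : V -> Prop).
Hypothesis hU : submod U.

Lemma submod0 : U 0. Proof. exact: hU.1. Qed.
Lemma submodD x y : U x -> U y -> U (x + y).
Proof. by move=> hx hy; have := hU.2 1 _ _ hx hy; rewrite scale1r. Qed.
Lemma submodZ a x : U x -> U (a *: x).
Proof. by move=> hx; have := hU.2 a _ _ hx submod0; rewrite addr0. Qed.
Lemma submodN x : U x -> U (- x).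
Proof. by rewrite -scaleN1r; apply: submodZ. Qed.
Lemma submodB x y : U x -> U y -> U (x - y).
Proof. by move=> hx hy; apply: submodD => //; apply: submodN. Qed.
Lemma submod_sum n (g : 'I_n -> V) : (forall k, U (g k)) -> U (\sum_k g k).
Proof. by move=> h; elim/big_ind: _ => //; [exact: submod0 | exact: submodD]. Qed.
End SubmoduleTheory.

Lemma submod_img_add (S : comUnitRingType) (U V : lmodType S) (f : U -> V)
    (A : U -> Prop) (B : V -> Prop) : slin f -> submod A -> submod B ->
  submod (fun x => exists a b, A a /\ B b /\ x = f a + b).
Proof.
move=> hf hA hB; split.
  by exists 0, 0; rewrite (slin0 hf) addr0; split; [exact: submod0 | split; [exact: submod0|]].
move=> c x y [a [b [ha [hb ->]]]] [a' [b' [ha' [hb' ->]]]].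
exists (c *: a + a'), (c *: b + b'); split; first exact: hA.2.
by split; [exact: hB.2 | rewrite hf scalerDr addrACA].
Qed.

Lemma submod_img (S : comUnitRingType) (U V : lmodType S) (f : U -> V) (A : U -> Prop) :
  slin f -> submod A -> submod (fun y => exists a, A a /\ y = f a).
Proof.
move=> hf hA; split; first by exists 0; rewrite (slin0 hf); split=> //; exact: submod0.
move=> c _ _ [a [ha ->]] [a' [ha' ->]]; exists (c *: a + a').
by rewrite hf; split=> //; exact: hA.2.
Qed.

Section IdealMul.
Variables (S : comUnitRingType) (V : lmodType S) (I : S -> Prop) (T : V -> Prop).

Lemma ideal_mul0 : ideal_mul I T 0.
Proof. by exists 0%N, (fun _ => 0), (fun _ => 0); split=> [[]//|]; rewrite big_ord0. Qed.

Lemma ideal_mul_gen a t : I a -> T t -> ideal_mul I T (a *: t).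
Proof. by exists 1%N, (fun _ => a), (fun _ => t); split=> //; rewrite big_ord1. Qed.

Lemma ideal_mulD x y : ideal_mul I T x -> ideal_mul I T y -> ideal_mul I T (x + y).
Proof.
move=> [n [a [t [h ->]]]] [m [b [s [h' ->]]]].
pose cat (A : Type) (f : 'I_n -> A) (g : 'I_m -> A) k :=
  match split k with inl i => f i | inr j => g j end.
exists (n + m)%N, (cat _ a b), (cat _ t s); split.
  by move=> k; rewrite /cat; case: (split k) => i.
rewrite big_split_ord /cat; congr (_ + _); apply: eq_bigr => i _.
  by rewrite (unsplitK (inl i)).
by rewrite (unsplitK (inr i)).
Qed.

Lemma ideal_mul_min (U : V -> Prop) : submod U ->
  (forall a t, I a -> T t -> U (a *: t)) -> forall x, ideal_mul I T x -> U x.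
Proof.
move=> hU h x [n [a [t [ht ->]]]]; apply: submod_sum => // k.
by case: (ht k) => ? ?; apply: h.
Qed.

Hypothesis hI : is_ideal I.

Lemma ideal_mulZ c x : ideal_mul I T x -> ideal_mul I T (c *: x).
Proof.
move=> [n [a [t [h ->]]]]; exists n, (fun k => c * a k), t; split.
  by move=> k; case: (h k) => ? ?; split=> //; apply: idealMl.
by rewrite scaler_sumr; apply: eq_bigr => k _; rewrite scalerA.
Qed.

Lemma ideal_mul_submod : submod (ideal_mul I T).
Proof.
split; first exact: ideal_mul0.
by move=> a x y hx hy; apply: ideal_mulD => //; apply: ideal_mulZ.
Qed.
End IdealMul.

Lemma ideal_mul_mono (S : comUnitRingType) (V : lmodType S) (I I' : S -> Prop)
    (T T' : V -> Prop) : (forall a, I a -> I' a) -> (forall t, T t -> T' t) ->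
  forall x, ideal_mul I T x -> ideal_mul I' T' x.
Proof.
move=> hI hT x [n [a [t [h ->]]]]; exists n, a, t; split=> // k.
by case: (h k) => ? ?; split; [apply: hI | apply: hT].
Qed.

Lemma ideal_mul_map (S : comUnitRingType) (U V : lmodType S) (I : S -> Prop)
    (T : U -> Prop) (T' : V -> Prop) (f : U -> V) :
  slin f -> (forall t, T t -> T' (f t)) ->
  forall x, ideal_mul I T x -> ideal_mul I T' (f x).
Proof.
move=> hf hT x [n [a [t [h ->]]]]; exists n, a, (fun k => f (t k)); split.
  by move=> k; case: (h k) => ? ?; split=> //; apply: hT.
by rewrite (slin_sum hf); apply: eq_bigr => k _; rewrite (slinZ hf).
Qed.

Lemma in_img_add (S : comUnitRingType) (U V : lmodType S) {I : S -> Prop} {T : V -> Prop}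
    (f : U -> V) (A : U -> Prop) a :
  A a -> exists a' z, A a' /\ ideal_mul I T z /\ f a = f a' + z.
Proof. by move=> ha; exists a, 0; rewrite addr0; split=> //; split=> //; exact: ideal_mul0. Qed.

Lemma in_add_ideal_mul (S : comUnitRingType) (V : lmodType S) {I : S -> Prop}
    {T : V -> Prop} (A : V -> Prop) a :
  A a -> exists a' z, A a' /\ ideal_mul I T z /\ a = a' + z.
Proof. by move=> ha; exists a, 0; rewrite addr0; split=> //; split=> //; exact: ideal_mul0. Qed.

Lemma ideal_spanP (S : comUnitRingType) (V : lmodType S) (I : S -> Prop) (z : V) :
  ideal_span I V z ->
  exists n (a : 'I_n -> S) (q : 'I_n -> V), (forall k, I (a k)) /\ z = \sum_k a k *: q k.
Proof. by move=> [n [a [q [h ->]]]]; exists n, a, q; split=> // k; case: (h k). Qed.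

Lemma ideal_span_map (S : comUnitRingType) (U V : lmodType S) (I : S -> Prop)
    (f : U -> V) : slin f -> forall x, ideal_span I U x -> ideal_span I V (f x).
Proof. by move=> hf; apply: ideal_mul_map. Qed.

Section DirectSum.
Variables (S : comUnitRingType) (V : lmodType S) (L T : V -> Prop).
Hypotheses (hL : submod L) (hT : submod T)
  (hLT : forall x, exists l t, L l /\ T t /\ x = l + t)
  (hLT0 : forall l t, L l -> T t -> l + t = 0 -> l = 0 /\ t = 0).

Definition projL (x : V) : V := proj1_sig (constructive_indefinite_description _ (hLT x)).
Definition projT (x : V) : V := x - projL x.

Lemma projLT x : x = projL x + projT x. Proof. by rewrite /projT addrC subrK. Qed.

Lemma proj_in x : L (projL x) /\ T (projT x).
Proof.
rewrite /projT /projL; case: constructive_indefinite_description => l [t [hl [ht e]]] /=.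
by rewrite e addrC addKr.
Qed.

Lemma direct_sum_inj l1 t1 l2 t2 : L l1 -> T t1 -> L l2 -> T t2 ->
  l1 + t1 = l2 + t2 -> l1 = l2 /\ t1 = t2.
Proof.
move=> hl1 ht1 hl2 ht2 e.
have [] := hLT0 (submodB hL hl1 hl2) (submodB hT ht1 ht2).
  by rewrite addrACA e -opprD subrr.
by move=> /eqP; rewrite subr_eq0 => /eqP -> /eqP; rewrite subr_eq0 => /eqP ->.
Qed.

Lemma projE x l t : L l -> T t -> x = l + t -> projL x = l /\ projT x = t.
Proof.
move=> hl ht e; have [? ?] := proj_in x.
by apply: direct_sum_inj => //; rewrite -projLT.
Qed.

Lemma projL_id l : L l -> projL l = l.
Proof. by move=> hl; rewrite (projE hl (submod0 hT) (esym (addr0 l))).1. Qed.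

Lemma projT_id t : T t -> projT t = t.
Proof. by move=> ht; rewrite (projE (submod0 hL) ht (esym (add0r t))).2. Qed.

Lemma projL_lin : slin projL.
Proof.
move=> a x y; have [? ?] := proj_in x; have [? ?] := proj_in y.
have [] := @projE (a *: x + y) (a *: projL x + projL y) (a *: projT x + projT y).
- exact: hL.2.
- exact: hT.2.
- by rewrite {1}(projLT x) {1}(projLT y) scalerDr addrACA.
by [].
Qed.

Lemma projT_lin : slin projT.
Proof. by move=> a x y; rewrite /projT projL_lin scalerBr addrACA opprD. Qed.
End DirectSum.

Section Coordinates.
Variables (S : comUnitRingType) (V : lmodType S) (n : nat).
Variables (i : V -> 'rV[S]_n) (r : 'rV[S]_n -> V).
Hypotheses (hi : slin i) (hr : slin r) (hri : cancel i r).

Local Notation e j := (r (delta_mx 0 j)).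

Lemma slin_expand (U : lmodType S) (h : V -> U) :
  slin h -> forall x, h x = \sum_j i x 0 j *: h (e j).
Proof.
move=> hh x; rewrite -{1}(hri x) {1}(row_sum_delta (i x)) (slin_sum hr) (slin_sum hh).
by apply: eq_bigr => j _; rewrite (slinZ hr) (slinZ hh).
Qed.

Lemma coord_expand x : x = \sum_j i x 0 j *: e j.
Proof. exact: (slin_expand (@slin_id _ V)). Qed.

Lemma coord_sum m (a : 'I_m -> S) (q : 'I_m -> V) j :
  i (\sum_k a k *: q k) 0 j = \sum_k a k * i (q k) 0 j.
Proof. by rewrite (slin_sum hi) summxE; apply: eq_bigr => k _; rewrite (slinZ hi) mxE. Qed.

Lemma coord_ideal_span (I : S -> Prop) : is_ideal I ->
  forall y, ideal_span I V y -> forall j, I (i y 0 j).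
Proof.
move=> hI y /ideal_spanP [m [a [q [ha ->]]]] j; rewrite coord_sum.
by apply: (ideal_sum hI) => k; apply: idealMr.
Qed.

Definition lin_ext (U : lmodType S) (g : 'I_n -> U) (x : V) : U := \sum_j i x 0 j *: g j.

Lemma lin_ext_lin (U : lmodType S) (g : 'I_n -> U) : slin (lin_ext g).
Proof.
move=> a x y; rewrite /lin_ext scaler_sumr -big_split /=; apply: eq_bigr => j _.
by rewrite hi !mxE scalerDl scalerA.
Qed.

Lemma lin_ext_in (U : lmodType S) (A : U -> Prop) (g : 'I_n -> U) x :
  submod A -> (forall j, A (g j)) -> A (lin_ext g x).
Proof. by move=> hA hg; apply: submod_sum => // j; apply: submodZ. Qed.

Lemma lin_extD (U : lmodType S) (g1 g2 : 'I_n -> U) x :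
  lin_ext (fun j => g1 j + g2 j) x = lin_ext g1 x + lin_ext g2 x.
Proof. by rewrite /lin_ext -big_split; apply: eq_bigr => j _; rewrite scalerDr. Qed.

Section Nakayama.
Variable J : S -> Prop.
Hypotheses (hJ : is_ideal J) (hJrad : forall a, J a -> in_jacobson a).
Variable chi : V -> V.
Hypotheses (hchi : slin chi) (hnear : forall x, ideal_span J V (x - chi x)).

Definition mxof (h : V -> V) : 'M[S]_n := \matrix_j i (h (e j)).

Lemma mxofP h : slin h -> forall v, v *m mxof h = i (h (r v)).
Proof.
move=> hh v; rewrite {1}(row_sum_delta v) mulmx_suml.
rewrite {2}(row_sum_delta v) (slin_sum hr) (slin_sum hh) (slin_sum hi).
apply: eq_bigr => j _; rewrite -scalemxAl -rowE rowK.
by rewrite (slinZ hr) (slinZ hh) (slinZ hi).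
Qed.

Lemma row_mul_inj (A B : 'M[S]_n) : (forall v : 'rV[S]_n, v *m A = v *m B) -> A = B.
Proof. by move=> h; apply/row_matrixP => j; rewrite !rowE h. Qed.

Let eta x := x - chi x.
Let M := mxof eta.
Let E := mxof id.
Let A := 1%:M - M.

Lemma eta_lin : slin eta.
Proof. by move=> a x y; rewrite /eta hchi scalerBr addrACA opprD. Qed.

(* [A] reduces to the identity modulo [J], so its determinant is a unit. *)
Lemma near_id_unitmx : A \in unitmx.
Proof.
rewrite unitmxE.
have hd : J (\det A - \det (1%:M : 'M[S]_n)).
  apply: (det_cong_ideal hJ) => j k; rewrite /A /M /mxof !mxE.
  rewrite addrAC subrr add0r; apply: (idealN hJ).
  by apply: (coord_ideal_span hJ); exact: hnear.
rewrite det1 in hd.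
by have := hJrad (idealN hJ hd) 1; rewrite mulr1 opprK addrC subrK.
Qed.

Lemma coord_chi x : i (chi x) = i x *m A.
Proof.
rewrite /A mulmxBr mulmx1 /M (mxofP eta_lin) hri -(slinB hi).
by rewrite /eta opprB addrC subrK.
Qed.

Lemma mxof_idE v : v *m E = i (r v).
Proof. exact: (mxofP (@slin_id _ V)). Qed.

Lemma mxof_id_comm : E *m A = A *m E.
Proof.
have EM : E *m M = M by apply: row_mul_inj => v; rewrite mulmxA mxof_idE !(mxofP eta_lin) hri.
have ME : M *m E = M by apply: row_mul_inj => v; rewrite mulmxA mxof_idE !(mxofP eta_lin) hri.
by rewrite /A mulmxBr mulmxBl mulmx1 mul1mx EM ME.
Qed.

Lemma near_id_inj : injective chi.
Proof.
move=> x y exy; have : i x *m A = i y *m A by rewrite -!coord_chi exy.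
move=> /(congr1 (mulmx^~ (invmx A))); rewrite -!mulmxA (mulmxV near_id_unitmx) !mulmx1.
by move=> eij; rewrite -(hri x) -(hri y) eij.
Qed.

Lemma near_id_surj y : exists x, chi x = y.
Proof.
exists (r (i y *m invmx A)).
rewrite -(hri (chi _)) coord_chi -mxof_idE -mulmxA mxof_id_comm mulmxA.
by rewrite -(mulmxA (i y)) (mulVmx near_id_unitmx) mulmx1 mxof_idE !hri.
Qed.
End Nakayama.
End Coordinates.

Definition normal_dec (S : comUnitRingType) (V : lmodType S) (I : S -> Prop)
    (Q L T : V -> Prop) : Prop :=
  submod L /\ submod T /\
  (forall x, exists l t, L l /\ T t /\ x = l + t) /\
  (forall l t, L l -> T t -> l + t = 0 -> l = 0 /\ t = 0) /\
  (forall x, Q x <-> exists l t, L l /\ ideal_mul I T t /\ x = l + t).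

Lemma normal_dec_L (S : comUnitRingType) (V : lmodType S) (I : S -> Prop)
    (Q L T : V -> Prop) : normal_dec I Q L T -> forall l, L l -> Q l.
Proof.
by move=> [_ [_ [_ [_ hQ]]]] l hl; apply/hQ; exact: (in_add_ideal_mul hl).
Qed.

Lemma ideal_mul_sub (S : comUnitRingType) (V : lmodType S) (I : S -> Prop) (T : V -> Prop) :
  submod T -> forall t, ideal_mul I T t -> T t.
Proof. by move=> hT; apply: ideal_mul_min => // a s _; apply: submodZ. Qed.

Lemma normal_dec_projT (S : comUnitRingType) (V : lmodType S) (I : S -> Prop)
    (Q L T : V -> Prop) (hLT : normal_dec I Q L T) :
  forall x, Q x -> ideal_mul I T (projT hLT.2.2.1 x).
Proof.
move=> x /(hLT.2.2.2.2) [l [t [hl [ht e]]]].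
have hTt := ideal_mul_sub hLT.2.1 ht.
by rewrite (projE hLT.1 hLT.2.1 hLT.2.2.1 hLT.2.2.2.1 hl hTt e).2.
Qed.

Section WindowTheory.
Variables (S : comUnitRingType) (p : nat) (Fr : frame S p) (X : window Fr).

Lemma wFD x y : wF X (x + y) = wF X x + wF X y.
Proof. by have := @wF_lin _ _ _ X 1 x y; rewrite !scale1r rmorph1 scale1r. Qed.
Lemma wF0 : wF X 0 = 0.
Proof. by apply: (@addIr _ (wF X 0)); rewrite -wFD !add0r. Qed.
Lemma wFZ a x : wF X (a *: x) = fsigma Fr a *: wF X x.
Proof. by have := @wF_lin _ _ _ X a x 0; rewrite !addr0 wF0 addr0. Qed.
Lemma wF_sum n (g : 'I_n -> wP X) : wF X (\sum_k g k) = \sum_k wF X (g k).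
Proof. exact: (big_morph _ wFD wF0). Qed.

Lemma wQ_submod : submod (wQ X).
Proof.
have [L [T [hL [hT [_ [_ hQ]]]]]] := wdecomp X.
split.
  apply/hQ; exists 0, 0; rewrite addr0; split; first exact: submod0.
  by split=> //; exact: ideal_mul0.
move=> a x y /hQ [l [t [hl [ht ->]]]] /hQ [l' [t' [hl' [ht' ->]]]].
apply/hQ; exists (a *: l + l'), (a *: t + t'); split; first exact: hL.2.
split; first exact: (ideal_mul_submod T (fI_ideal Fr)).2.
by rewrite scalerDr addrACA.
Qed.

Lemma wQ_ideal_span x : ideal_span (fI Fr) (wP X) x -> wQ X x.
Proof.
have [L [T [hL [hT [hLT [_ hQ]]]]]] := wdecomp X.
apply: ideal_mul_min; first exact: wQ_submod.
move=> a y ha _; have [l [t [hl [ht ->]]]] := hLT y.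
apply/hQ; exists (a *: l), (a *: t); split; first exact: submodZ.
by split; [exact: ideal_mul_gen | rewrite scalerDr].
Qed.

Lemma wF1D x y : wQ X x -> wQ X y -> wF1 X (x + y) = wF1 X x + wF1 X y.
Proof. by move=> hx hy; have := wF1_lin 1 hx hy; rewrite !scale1r rmorph1 scale1r. Qed.
Lemma wF1_0 : wF1 X 0 = 0.
Proof.
have hQ0 := submod0 wQ_submod.
by apply: (@addIr _ (wF1 X 0)); rewrite -wF1D // !add0r.
Qed.
Lemma wF1Z a x : wQ X x -> wF1 X (a *: x) = fsigma Fr a *: wF1 X x.
Proof.
move=> hx; have := wF1_lin a hx (submod0 wQ_submod).
by rewrite !addr0 wF1_0 addr0.
Qed.
Lemma wF1_sum n (g : 'I_n -> wP X) : (forall k, wQ X (g k)) ->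
  wF1 X (\sum_k g k) = \sum_k wF1 X (g k).
Proof.
move=> hg; suff [] : wQ X (\sum_k g k) /\ wF1 X (\sum_k g k) = \sum_k wF1 X (g k) by [].
elim/big_rec2: _ => [|k y1 y2 _ [hy <-]]; first by split; [exact: (submod0 wQ_submod) | exact: wF1_0].
by split; [exact: (submodD wQ_submod) | rewrite wF1D].
Qed.

Lemma wF1_ideal_span n (a : 'I_n -> S) (q : 'I_n -> wP X) : (forall k, fI Fr (a k)) ->
  wF1 X (\sum_k a k *: q k) = \sum_k fsigma1 Fr (a k) *: wF X (q k).
Proof.
move=> ha; rewrite wF1_sum; last by move=> k; apply: wQ_ideal_span; exact: ideal_mul_gen.
by apply: eq_bigr => k _; rewrite wF1_F.
Qed.
End WindowTheory.

Section FrameTheory.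
Variables (S : comUnitRingType) (p : nat) (Fr : frame S p).

Lemma fsigma1D x y : fI Fr x -> fI Fr y -> fsigma1 Fr (x + y) = fsigma1 Fr x + fsigma1 Fr y.
Proof. by move=> hx hy; have := fsigma1_lin 1 hx hy; rewrite !mul1r rmorph1 mul1r. Qed.

Lemma fsigma1_0 : fsigma1 Fr 0 = 0.
Proof.
have hI0 := ideal0 (fI_ideal Fr).
by apply: (@addIr _ (fsigma1 Fr 0)); rewrite -fsigma1D // !add0r.
Qed.

Lemma fsigma1M a x : fI Fr x -> fsigma1 Fr (a * x) = fsigma Fr a * fsigma1 Fr x.
Proof.
move=> hx; have := fsigma1_lin a hx (ideal0 (fI_ideal Fr)).
by rewrite !addr0 fsigma1_0 addr0.
Qed.

Lemma fsigma1_sum n (b x : 'I_n -> S) : (forall k, fI Fr (x k)) ->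
  fsigma1 Fr (\sum_k b k * x k) = \sum_k fsigma Fr (b k) * fsigma1 Fr (x k).
Proof.
move=> hx; have hI := fI_ideal Fr.
suff [] : fI Fr (\sum_k b k * x k) /\
    fsigma1 Fr (\sum_k b k * x k) = \sum_k fsigma Fr (b k) * fsigma1 Fr (x k) by [].
elim/big_rec2: _ => [|k y1 y2 _ [hy <-]]; first by split; [exact: ideal0 | exact: fsigma1_0].
by split; [apply: idealD => //; apply: idealMl | rewrite fsigma1_lin].
Qed.
End FrameTheory.

(* [theta := sum_k c_k sigma(x_k)] for a relation [sum_k c_k sigma_1(x_k) = 1]. *)
Lemma exists_theta (S : comUnitRingType) (p : nat) (F : frame S p) : exists th : S,
  (forall (X : window F) q, wQ X q -> wF X q = th *: wF1 X q) /\
  (forall F' : frame S p, strict_id_hom F F' -> forall a, fI F' a ->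
      fsigma F a = th * fsigma1 F' a).
Proof.
have [n [c [x [hx hs]]]] := fgen F.
exists (\sum_k c k * fsigma F (x k)); split.
  move=> X q hq; rewrite -{1}(scale1r (wF X q)) -hs !scaler_suml.
  by apply: eq_bigr => k _; rewrite -!scalerA -wF1_F // wF1Z.
move=> F' [hinc [hsig hsig1]] a ha.
rewrite -[fsigma F a]mulr1 -hs mulr_sumr mulr_suml; apply: eq_bigr => k _.
have e : fsigma F' a * fsigma1 F' (x k) = fsigma F' (x k) * fsigma1 F' a.
  by rewrite -(fsigma1M a (hinc _ (hx k))) -(fsigma1M (x k) ha) mulrC.
by rewrite -(hsig1 _ (hx k)) -!hsig mulrCA e mulrA.
Qed.

Section BaseChangeWindow.
Variables (S : comUnitRingType) (p : nat) (F F' : frame S p).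
Hypothesis halpha : strict_id_hom F F'.
Variables (X : window F) (n : nat) (i : wP X -> 'rV[S]_n) (r : 'rV[S]_n -> wP X).
Hypotheses (hi : slin i) (hr : slin r) (hri : cancel i r).
Variables (L T : wP X -> Prop).
Hypothesis hLT : normal_dec (fI F) (wQ X) L T.

Let hL := hLT.1.
Let hT := hLT.2.1.
Let hspan := hLT.2.2.1.
Let hindep := hLT.2.2.2.1.
Let hQ := hLT.2.2.2.2.
Local Notation piL := (projL hspan).
Local Notation piT := (projT hspan).

(* [F_1'] on [I'P], i.e. [a x |-> sigma_1'(a) F(x)], computed in coordinates. *)
Definition ext_F1 (y : wP X) : wP X :=
  \sum_j fsigma1 F' (i y 0 j) *: wF X (r (delta_mx 0 j)).

Lemma ext_F1_sum m (a : 'I_m -> S) (q : 'I_m -> wP X) : (forall k, fI F' (a k)) ->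
  ext_F1 (\sum_k a k *: q k) = \sum_k fsigma1 F' (a k) *: wF X (q k).
Proof.
move=> ha; have [_ [hsig _]] := halpha.
have ext_F1_term j : fsigma1 F' (i (\sum_k a k *: q k) 0 j) *: wF X (r (delta_mx 0 j)) =
    \sum_k fsigma1 F' (a k) *: (fsigma F (i (q k) 0 j) *: wF X (r (delta_mx 0 j))).
  rewrite (coord_sum hi) (eq_bigr (fun k => i (q k) 0 j * a k)); last by move=> k _; rewrite mulrC.
  rewrite fsigma1_sum // scaler_suml; apply: eq_bigr => k _.
  by rewrite scalerA hsig mulrC.
rewrite /ext_F1 (eq_bigr _ (fun j _ => ext_F1_term j)) exchange_big /=.
apply: eq_bigr => k _; rewrite [X in wF _ X](coord_expand hr hri).
by rewrite wF_sum scaler_sumr; apply: eq_bigr => j _; rewrite wFZ.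
Qed.

Lemma ext_F1Z a y : fI F' a -> ext_F1 (a *: y) = fsigma1 F' a *: wF X y.
Proof. by move=> ha; have := @ext_F1_sum 1 (fun _ => a) (fun _ => y); rewrite !big_ord1; apply. Qed.

Lemma ext_F1_lin a y z : ideal_span (fI F') (wP X) y -> ideal_span (fI F') (wP X) z ->
  ext_F1 (a *: y + z) = fsigma F a *: ext_F1 y + ext_F1 z.
Proof.
move=> hy hz; have [_ [hsig _]] := halpha.
rewrite /ext_F1 scaler_sumr -big_split /=; apply: eq_bigr => j _.
have hI' := fI_ideal F'.
rewrite hi !mxE fsigma1_lin; try exact: (coord_ideal_span hi hI').
by rewrite scalerDl scalerA hsig.
Qed.

Definition bcQ (x : wP X) : Prop :=
  exists q z, wQ X q /\ ideal_span (fI F') (wP X) z /\ x = q + z.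

Definition bcF1 (x : wP X) : wP X := wF1 X (piL x) + ext_F1 (piT x).

Lemma bcQ_normal_dec : normal_dec (fI F') bcQ L T.
Proof.
have [hinc _] := halpha.
apply: (conj hL (conj hT (conj hspan (conj hindep _)))) => x; split.
  move=> [q [z [/hQ [l [t [hl [ht ->]]]] [/ideal_spanP [m [a [s [ha ->]]]] ->]]]].
  exists (l + \sum_k a k *: piL (s k)), (t + \sum_k a k *: piT (s k)); split.
    apply: (submodD hL) => //; apply: (submod_sum hL) => k.
    by apply: (submodZ hL); case: (proj_in hspan (s k)).
  split.
    apply: ideal_mulD; first exact: ideal_mul_mono ht.
    exists m, a, (fun k => piT (s k)); split=> // k.
    by split; [exact: ha | case: (proj_in hspan (s k))].
  rewrite addrACA -big_split /=; congr (_ + _ + _); apply: eq_bigr => k _.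
  by rewrite -scalerDr -projLT.
move=> [l [t [hl [ht ->]]]]; exists l, t; split; first exact: (normal_dec_L hLT hl).
by split=> //; exact: ideal_mul_mono ht.
Qed.

Lemma bcQ_projT x : bcQ x -> ideal_span (fI F') (wP X) (piT x).
Proof.
move=> /(bcQ_normal_dec.2.2.2.2) [l [t [hl [ht e]]]].
have hTt := ideal_mul_sub hT ht.
by rewrite (projE hL hT hspan hindep hl hTt e).2; apply: ideal_mul_mono ht.
Qed.

Lemma bcF1_wQ q : wQ X q -> bcF1 q = wF1 X q.
Proof.
have [hinc [_ hsig1]] := halpha.
move=> hq; have /hQ [l [t [hl [ht e]]]] := hq.
rewrite /bcF1; have [-> ->] := projE hL hT hspan hindep hl (ideal_mul_sub hT ht) e.
rewrite e wF1D; first last.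
- by apply: wQ_ideal_span; apply: ideal_mul_mono ht.
- exact: (normal_dec_L hLT hl).
congr (_ + _); have /ideal_spanP [m [a [s [ha ->]]]] : ideal_span (fI F) (wP X) t.
  exact: ideal_mul_mono ht.
rewrite wF1_ideal_span // ext_F1_sum; last by move=> k; apply: hinc.
by apply: eq_bigr => k _; rewrite hsig1.
Qed.

Lemma bcF_lin a x y : wF X (a *: x + y) = fsigma F' a *: wF X x + wF X y.
Proof. by have [_ [hsig _]] := halpha; rewrite hsig; exact: wF_lin. Qed.

Lemma bcF1_lin a x y : bcQ x -> bcQ y -> bcF1 (a *: x + y) = fsigma F' a *: bcF1 x + bcF1 y.
Proof.
have [_ [hsig _]] := halpha.
move=> hx hy; rewrite /bcF1 (projL_lin hL hT hspan hindep) (projT_lin hL hT hspan hindep).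
rewrite wF1_lin; try exact: (normal_dec_L hLT (proj_in hspan _).1).
rewrite ext_F1_lin; try exact: bcQ_projT.
by rewrite hsig scalerDr addrACA.
Qed.

Lemma bcF1_F a x : fI F' a -> bcF1 (a *: x) = fsigma1 F' a *: wF X x.
Proof.
move=> ha; rewrite /bcF1 (slinZ (projL_lin hL hT hspan hindep)).
rewrite (slinZ (projT_lin hL hT hspan hindep)).
have hLx := normal_dec_L hLT (proj_in hspan x).1.
have [th [hthF hthsig]] := exists_theta F.
rewrite wF1Z // ext_F1Z // (hthsig F' halpha a ha) mulrC -scalerA -hthF //.
by rewrite -scalerDr -wFD -projLT.
Qed.

Lemma bcF1_gen x : exists (m : nat) (c : 'I_m -> S) (q : 'I_m -> wP X),
  (forall k, bcQ (q k)) /\ x = \sum_(k < m) c k *: bcF1 (q k).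
Proof.
have [m [c [q [hq ->]]]] := wF1_gen x.
exists m, c, q; split.
  by move=> k; exact: (in_add_ideal_mul (hq k)).
by apply: eq_bigr => k _; rewrite bcF1_wQ.
Qed.

Definition base_change_window : window F' :=
  @Window S p F' (wP X) bcQ (wF X) bcF1 (wP_fgproj X) bcF_lin bcF1_lin
    (ex_intro _ L (ex_intro _ T bcQ_normal_dec)) bcF1_F bcF1_gen.

Lemma base_change_window_wmap : wmap (id : wP X -> wP base_change_window).
Proof.
split; first exact: slin_id.
split; first by move=> x hx; exact: (in_add_ideal_mul hx).
by split=> // x hx /=; rewrite bcF1_wQ.
Qed.
End BaseChangeWindow.

Lemma wmap_id (S : comUnitRingType) (p : nat) (Fr : frame S p) (X : window Fr) :
  wmap (@id (wP X)).
Proof. by split; [exact: slin_id | do 2!split=> //]. Qed.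

Lemma wmap_comp (S : comUnitRingType) (p : nat) (F1 F2 F3 : frame S p)
    (X1 : window F1) (X2 : window F2) (X3 : window F3)
    (f : wP X1 -> wP X2) (g : wP X2 -> wP X3) : wmap f -> wmap g -> wmap (g \o f).
Proof.
move=> [lf [qf [ff f1f]]] [lg [qg [fg f1g]]]; split; first exact: slin_comp.
split; first by move=> x hx; apply: qg; apply: qf.
split; first by move=> x /=; rewrite ff fg.
by move=> x hx /=; rewrite f1f // f1g //; apply: qf.
Qed.

Section IsoBaseChange.
Variables (S : comUnitRingType) (p : nat) (F F' : frame S p).

Definition iso_base_change (P : window F) (P' : window F') (u : wP P -> wP P') : Prop :=
  wmap u /\ exists w : wP P' -> wP P, slin w /\ cancel u w /\ cancel w u /\
    forall y, wQ P' y <-> exists q z, wQ P q /\ ideal_span (fI F') (wP P) z /\ w y = q + z.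

Lemma iso_base_change_wmap (P : window F) (P' : window F') (u : wP P -> wP P')
    (w : wP P' -> wP P) (P'' : window F') (v : wP P -> wP P'') :
  wmap u -> slin w -> cancel u w -> cancel w u ->
  (forall y, wQ P' y -> exists q z, wQ P q /\ ideal_span (fI F') (wP P) z /\ w y = q + z) ->
  wmap v -> wmap (v \o w).
Proof.
move=> [lu [qu [fu f1u]]] hw wu uw hQ [lv [qv [fv f1v]]].
have hv_span z : ideal_span (fI F') (wP P) z -> wQ P'' (v z).
  by move=> hz; apply: wQ_ideal_span; exact: ideal_span_map.
split; first exact: slin_comp.
split.
  move=> y /hQ [q [z [hq [hz e]]]] /=; rewrite e (slinD lv).
  by apply: (submodD (wQ_submod _)); [exact: qv | exact: hv_span].
split; first by move=> y /=; rewrite -{1}(uw y) -fu wu fv.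
move=> y hy /=; have [q [z [hq [hz e]]]] := hQ _ hy.
have /ideal_spanP [n [a [t [ha ez]]]] := hz.
have ey : y = u q + \sum_k a k *: u (t k).
  rewrite -(uw y) e (slinD lu) ez (slin_sum lu).
  by congr (_ + _); apply: eq_bigr => k _; rewrite (slinZ lu).
have hut : wQ P' (\sum_k a k *: u (t k)).
  by apply: wQ_ideal_span; exists n, a, (fun k => u (t k)).
have hvt : wQ P'' (\sum_k a k *: v (t k)).
  by apply: wQ_ideal_span; exists n, a, (fun k => v (t k)).
have ez' : v z = \sum_k a k *: v (t k).
  by rewrite ez (slin_sum lv); apply: eq_bigr => k _; rewrite (slinZ lv).
rewrite {1}ey (wF1D (qu _ hq) hut) -f1u // wF1_ideal_span // (slinD hw) wu (slin_sum hw).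
rewrite e !(slinD lv) ez' (wF1D (qv _ hq) hvt) wF1_ideal_span // -f1v //.
rewrite (slin_sum lv); congr (_ + _); apply: eq_bigr => k _.
by rewrite (slinZ hw) -fu wu (slinZ lv) fv.
Qed.

Lemma iso_base_changeW (P : window F) (P' : window F') (u : wP P -> wP P') :
  iso_base_change u -> is_base_change P P' u.
Proof.
move=> [hu [w [hw [wu [uw hQ]]]]]; split=> // P'' v hv; split; last first.
  by move=> w1 w2 _ _ h1 h2 y; rewrite -(uw y) h1 h2.
exists (v \o w); split; last by move=> x /=; rewrite wu.
by apply: (iso_base_change_wmap hu) => // y /hQ.
Qed.
End IsoBaseChange.

Section BaseChangeIso.
Variables (S : comUnitRingType) (p : nat) (F F' : frame S p).
Hypothesis halpha : strict_id_hom F F'.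

Lemma exists_iso_base_change (P : window F) :
  exists (B : window F') (u : wP P -> wP B), iso_base_change u.
Proof.
have [n [i [r [hi [hr hri]]]]] := wP_fgproj P.
have [L [T hLT]] := wdecomp P.
exists (base_change_window halpha hi hr hri hLT), id.
split; first exact: base_change_window_wmap.
by exists id; do 3!split=> //; exact: slin_id.
Qed.

Lemma base_change_iso (P : window F) (P' : window F') (u : wP P -> wP P') :
  is_base_change P P' u -> iso_base_change u.
Proof.
have [B [u0 hiso0]] := exists_iso_base_change P.
have [hu0 [w0 [hw0 [wu0 [uw0 hQ0]]]]] := hiso0.
move=> [hu hU]; have [lu [qu _]] := hu.
have [[w [hw ew]] _] := hU B u0 hu0.
have [[w' [hw' ew']] _] := (iso_base_changeW hiso0).2 P' u hu.
have w'E y : w' y = u (w0 y) by rewrite -{1}(uw0 y) ew'.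
have uw y : u (w0 (w y)) = y.
  rewrite -w'E; apply: (hU P' u hu).2 (wmap_comp hw hw') (wmap_id P') _ (fun _ => erefl) y.
  by move=> x /=; rewrite ew ew'.
split=> //; exists (w0 \o w); split; first exact: slin_comp hw.1 hw0.
split; first by move=> x /=; rewrite ew wu0.
split=> // y; split; first by move=> /(hw.2.1) /hQ0.
move=> [q [z [hq [hz /= e]]]]; rewrite -(uw y) e (slinD lu).
apply: (submodD (wQ_submod _)); first exact: qu.
by apply: wQ_ideal_span; exact: ideal_span_map.
Qed.
End BaseChangeIso.

Lemma normal_dec_cap (S : comUnitRingType) (V : lmodType S) (I : S -> Prop)
    (Q L T : V -> Prop) : normal_dec I Q L T ->
  forall q t, Q q -> T t -> ideal_span I V (q - t) -> ideal_span I V q.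
Proof.
move=> hLT q t hq ht hqt; have [hL [hT [hspan [hindep hQ]]]] := hLT.
have /hQ [l [t1 [hl [ht1 e]]]] := hq.
have [hdL hdT] := proj_in hspan (q - t).
have [el _] : l = projL hspan (q - t) /\ t1 = projT hspan (q - t) + t.
  apply: (direct_sum_inj hL hT hindep) => //.
  - exact: (ideal_mul_sub hT ht1).
  - exact: (submodD hT).
  by rewrite addrA -projLT -e addrNK.
rewrite e el; apply: (ideal_mulD (ideal_span_map (projL_lin hL hT hspan hindep) hqt)).
exact: ideal_mul_mono ht1.
Qed.

Section HodgeLift.
Variables (S : comUnitRingType) (p : nat) (F F' : frame S p).
Hypothesis hinc : forall a, fI F a -> fI F' a.
Variables (P : window F) (P' : window F') (u : wP P -> wP P').
Hypothesis hiso : iso_base_change u.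

Lemma hodge_image_lifts : lifts_hodge (fI F) P' (hodge_image P u).
Proof.
have [hu [w [hw [wu [uw hQ']]]]] := hiso; have [lu [qu _]] := hu.
have hI := fI_ideal F.
have hIP' := ideal_mul_submod (fun _ : wP P' => True) hI.
have [L [T hLT]] := wdecomp P; have [hL [hT [hspan _]]] := hLT.
have img0 (A : wP P -> Prop) x : A 0 -> ideal_span (fI F) (wP P') x ->
    exists a z, A a /\ ideal_span (fI F) (wP P') z /\ x = u a + z.
  by move=> hA hx; exists 0, x; rewrite (slin0 lu) add0r.
split; first exact: (submod_img_add lu (wQ_submod P) hIP').
split; first by move=> x; apply: img0; exact: (submod0 (wQ_submod P)).
split.
  exists (fun x => exists t z, T t /\ ideal_span (fI F) (wP P') z /\ x = u t + z).
  split; first exact: (submod_img_add lu hT hIP').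
  split; first by move=> x; apply: img0; exact: (submod0 hT).
  split.
    move=> y; have [l [t [hl [ht e]]]] := hspan (w y).
    exists (u l), (u t); split; first exact: (in_img_add u (normal_dec_L hLT hl)).
    by split; [exact: (in_img_add u ht) | rewrite -(slinD lu) -e uw].
  move=> x [q [z [hq [hz ex]]]] [t [z' [ht [hz' ex']]]].
  have hqIP : ideal_span (fI F) (wP P) q.
    apply: (normal_dec_cap hLT hq ht).
    have e1 : w x = q + w z by rewrite ex (slinD hw) wu.
    have e2 : w x = t + w z' by rewrite ex' (slinD hw) wu.
    have -> : q = t + w z' - w z by rewrite -e2 e1 addrK.
    rewrite addrAC [t + _]addrC addrK.
    by apply: (submodB (ideal_mul_submod _ hI)); exact: (ideal_span_map hw).
  by rewrite ex; apply: ideal_mulD => //; exact: (ideal_span_map lu).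
move=> x; split.
  move=> /hQ' [q [z [hq [hz e]]]]; exists (u q), (u z); split; first exact: (in_img_add u hq).
  by split; [exact: (ideal_span_map lu) | rewrite -(slinD lu) -e uw].
move=> [_ [z [[q [z0 [hq [hz0 ->]]]] [hz ->]]]].
have hQ'sub := wQ_submod P'.
apply: (submodD hQ'sub); first apply: (submodD hQ'sub); first exact: qu.
  by apply: wQ_ideal_span; exact: (ideal_mul_mono hinc _ hz0).
exact: wQ_ideal_span.
Qed.
End HodgeLift.

Section FullyFaithful.
Variables (S : comUnitRingType) (p : nat) (F F' : frame S p).
Variables (P1 P2 : window F) (P1' P2' : window F').
Variables (u1 : wP P1 -> wP P1') (u2 : wP P2 -> wP P2').
Hypotheses (hiso1 : iso_base_change u1) (hiso2 : iso_base_change u2).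
Variable g : wP P1' -> wP P2'.
Hypothesis hg : wmap g.

Lemma pair_hom_of_descent (f : wP P1 -> wP P2) :
  wmap f -> (forall x, g (u1 x) = u2 (f x)) ->
  pair_hom (hodge_image P1 u1) (hodge_image P2 u2) g.
Proof.
move=> [lf [qf _]] e; split=> // x [q [z [hq [hz ->]]]].
exists (f q), (g z); split; first exact: qf.
by split; [exact: (ideal_span_map hg.1) | rewrite (slinD hg.1) e].
Qed.

Lemma descent_of_pair_hom :
  pair_hom (hodge_image P1 u1) (hodge_image P2 u2) g ->
  exists f : wP P1 -> wP P2, wmap f /\ forall x, g (u1 x) = u2 (f x).
Proof.
have [[lu1 [_ [fu1 f1u1]]] [w1 [hw1 [wu1 [uw1 _]]]]] := hiso1.
have [[lu2 [_ [fu2 f1u2]]] [w2 [hw2 [wu2 [uw2 _]]]]] := hiso2.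
have [lg [qg [fg f1g]]] := hg.
move=> [_ hgH].
have hQf q : wQ P1 q -> wQ P2 (w2 (g (u1 q))).
  move=> hq; have [q2 [z [hq2 [hz ->]]]] : hodge_image P2 u2 (g (u1 q)).
    by apply: hgH; exact: (in_img_add u1 hq).
  rewrite (slinD hw2) wu2; apply: (submodD (wQ_submod _)) => //.
  by apply: wQ_ideal_span; exact: (ideal_span_map hw2).
exists (w2 \o g \o u1); split; last by move=> x /=; rewrite uw2.
split; first by apply: slin_comp => //; apply: slin_comp.
split; first exact: hQf.
split; first by move=> x /=; rewrite fu1 fg -{1}(uw2 (g (u1 x))) -fu2 wu2.
move=> q hq /=; rewrite f1u1 // f1g; last exact: hiso1.1.2.1.
by rewrite -{1}(uw2 (g (u1 q))) -f1u2 ?wu2 //; exact: hQf.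
Qed.

Lemma descent_unique (f1 f2 : wP P1 -> wP P2) :
  (forall x, g (u1 x) = u2 (f1 x)) -> (forall x, g (u1 x) = u2 (f2 x)) ->
  forall x, f1 x = f2 x.
Proof.
have [_ [w2 [_ [wu2 _]]]] := hiso2.
by move=> e1 e2 x; rewrite -(wu2 (f1 x)) -(wu2 (f2 x)) -e1 -e2.
Qed.
End FullyFaithful.

Section LiftNormalDecomposition.
Variables (S : comUnitRingType) (V : lmodType S) (n : nat).
Variables (i : V -> 'rV[S]_n) (r : 'rV[S]_n -> V).
Hypotheses (hi : slin i) (hr : slin r) (hri : cancel i r).
Variables (I J : S -> Prop).
Hypotheses (hJ : is_ideal J) (hJrad : forall a, J a -> in_jacobson a).
Variables (Q L' T' W W' : V -> Prop).
Hypotheses (hLT' : normal_dec J Q L' T')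
  (hQW : forall x, Q x <-> exists w z, W w /\ ideal_span J V z /\ x = w + z).
Hypotheses (hW : submod W) (hW' : submod W') (hIW : forall x, ideal_span I V x -> W x)
  (hsum : forall x, exists w w', W w /\ W' w' /\ x = w + w')
  (hcap : forall x, W x -> W' x -> ideal_span I V x).

Let hL' := hLT'.1.
Let hT' := hLT'.2.1.
Let hspan' := hLT'.2.2.1.
Let hindep' := hLT'.2.2.2.1.
Local Notation pL := (projL hspan').
Local Notation pT := (projT hspan').
Local Notation e j := (r (delta_mx 0 j)).
Let hpL := projL_lin hL' hT' hspan' hindep'.
Let hpT := projT_lin hL' hT' hspan' hindep'.
Let hJV := ideal_mul_submod (fun _ : V => True) hJ.

Lemma W_sub_Q x : W x -> Q x.
Proof. by move=> hx; apply/hQW; exact: (in_add_ideal_mul hx). Qed.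

Section Construction.
Variables (c a b : 'I_n -> V).
Hypotheses (hc : forall j, W (c j) /\ ideal_span J V (pL (e j) - c j))
  (hab : forall j, W (a j) /\ W' (b j) /\ pT (e j) = a j + b j).

(* [psi] moves [L'] into [W], [phi] moves [T'] into [W'], both modulo [JV]. *)
Let psi := lin_ext i c.
Let phi := lin_ext i b.
Let lam t := pL (t - phi t).
Let chi x := psi (pL x + lam (pT x)) + phi (pT x).

Let hpsi : slin psi := lin_ext_lin hi c.
Let hphi : slin phi := lin_ext_lin hi b.

Lemma lam_lin : slin lam.
Proof. by move=> s x y; rewrite /lam hphi -hpL scalerBr addrACA opprD. Qed.

Lemma chi_lin : slin chi.
Proof.
move=> s x y; rewrite /chi hpT lam_lin hpL.
by rewrite addrACA -scalerDr hpsi hphi scalerDr addrACA.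
Qed.

Lemma psi_near l : L' l -> ideal_span J V (l - psi l).
Proof.
move=> hl; rewrite -{1}(projL_id hL' hT' hspan' hindep' hl) (slin_expand hr hri hpL).
rewrite /psi /lin_ext -sumrB.
apply: (submod_sum hJV) => j; rewrite -scalerBr; apply: (submodZ hJV).
by case: (hc j).
Qed.

Lemma phi_near t : W (pT t - phi (pT t)).
Proof.
have pT_split x : pT x = lin_ext i a x + phi x.
  rewrite (slin_expand hr hri hpT) -lin_extD; apply: eq_bigr => j _.
  by case: (hab j) => _ [_ ->].
rewrite -{1}(projT_id hL' hT' hspan' hindep' (proj_in hspan' t).2) pT_split addrK.
by apply: (lin_ext_in i _ hW) => j; case: (hab j).
Qed.

Lemma chi_near x : ideal_span J V (x - chi x).
Proof.
set d := pT x - phi (pT x); set m := pL x + lam (pT x).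
have -> : x - chi x = (m - psi m) + pT d.
  have regroup (G : zmodType) (A B C D E : G) : A + B - (C + D) = A + E - C + (B - D - E).
    by rewrite (addrAC A E) -(addrA (A - C)) (addrC E) subrK opprD addrACA.
  by rewrite {1}(projLT hspan' x) /chi (regroup _ _ _ _ _ (lam (pT x))).
apply: (submodD hJV); first by apply: psi_near; apply: (submodD hL'); exact: (proj_in hspan' _).1.
by apply: (ideal_mul_mono _ _ (normal_dec_projT hLT' (W_sub_Q (phi_near x)))).
Qed.

Let L := fun y => exists l, L' l /\ y = psi l.
Let T := fun y => exists t, T' t /\ y = phi t.

Lemma lifted_span y : exists l t, L l /\ T t /\ y = l + t.
Proof.
have [x <-] := near_id_surj hi hr hri hJ hJrad chi_lin chi_near y.
exists (psi (pL x + lam (pT x))), (phi (pT x)); split=> //.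
  exists (pL x + lam (pT x)); split=> //.
  by apply: (submodD hL'); exact: (proj_in hspan' _).1.
by split=> //; exists (pT x); split=> //; exact: (proj_in hspan' _).2.
Qed.

Lemma lifted_indep l t : L l -> T t -> l + t = 0 -> l = 0 /\ t = 0.
Proof.
move=> [l' [hl' ->]] [t' [ht' ->]] e0.
have hlx : L' (l' - lam t') by apply: (submodB hL') => //; exact: (proj_in hspan' _).1.
have [eL eT] := projE hL' hT' hspan' hindep' hlx ht' (erefl (l' - lam t' + t')).
have hx : chi (l' - lam t' + t') = chi 0.
  by rewrite (slin0 chi_lin) /chi eL eT subrK.
have [el et] := direct_sum_inj hL' hT' hindep' hlx ht' (submod0 hL') (submod0 hT')
  (etrans (near_id_inj hi hr hri hJ hJrad chi_lin chi_near hx) (esym (addr0 0))).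
rewrite et (slin0 lam_lin) subr0 in el.
by rewrite el et (slin0 hpsi) (slin0 hphi).
Qed.

Lemma lifted_normal_dec : normal_dec I W L T.
Proof.
have hL : submod L := submod_img hpsi hL'.
have hT : submod T := submod_img hphi hT'.
have hLW y : L y -> W y.
  by move=> [l [_ ->]]; apply: (lin_ext_in i _ hW) => j; case: (hc j).
apply: (conj hL (conj hT (conj lifted_span (conj lifted_indep _)))) => x; split.
  move=> hx; have [y1 [y2 [hy1 [hy2 e]]]] := lifted_span x.
  exists y1, y2; split=> //; split=> //.
  have hy2W : W y2.
    by rewrite -[y2](addKr y1) -e; apply: (submodD hW) => //; exact: (submodN hW (hLW _ hy1)).
  have hy2W' : W' y2.
    by case: hy2 => t [_ ->]; apply: (lin_ext_in i _ hW') => j; case: (hab j) => _ [].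
  rewrite -(projT_id hL hT lifted_span lifted_indep hy2).
  apply: (ideal_mul_map (projT_lin hL hT lifted_span lifted_indep)) (hcap hy2W hy2W') => y _.
  exact: (proj_in lifted_span y).2.
move=> [l [t [hl [ht ->]]]]; apply: (submodD hW); first exact: hLW.
by apply: hIW; exact: (ideal_mul_mono _ _ ht).
Qed.
End Construction.

Lemma lift_normal_dec : exists L T, normal_dec I W L T.
Proof.
have hc j : exists c, W c /\ ideal_span J V (pL (e j) - c).
  have /hQW [w [z [hw [hz ez]]]] := normal_dec_L hLT' (proj_in hspan' (e j)).1.
  by exists w; rewrite ez addrC addKr.
have hab j : exists ab : V * V, W ab.1 /\ W' ab.2 /\ pT (e j) = ab.1 + ab.2.
  by have [w [w' [hw [hw' ew]]]] := hsum (pT (e j)); exists (w, w').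
have [c {}hc] := functional_choice _ hc.
have [ab {}hab] := functional_choice _ hab.
by eexists; eexists; exact: (lifted_normal_dec hc hab).
Qed.
End LiftNormalDecomposition.

Section DescendedWindow.
Variables (S : comUnitRingType) (p : nat) (F F' : frame S p).
Hypothesis halpha : strict_id_hom F F'.
Variables (P' : window F') (W W' : wP P' -> Prop).
Hypotheses (hW : submod W) (hIW : forall x, ideal_span (fI F) (wP P') x -> W x)
  (hW' : submod W') (hsum : forall x, exists w w', W w /\ W' w' /\ x = w + w')
  (hcap : forall x, W x -> W' x -> ideal_span (fI F) (wP P') x)
  (hQW : forall x, wQ P' x <-> exists w z, W w /\ ideal_span (fI F') (wP P') z /\ x = w + z).

Let hinc := halpha.1.
Let hsig := halpha.2.1.
Let hsig1 := halpha.2.2.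

Lemma W_sub_wQ x : W x -> wQ P' x.
Proof. by move=> hx; apply/hQW; exact: (in_add_ideal_mul hx). Qed.

Lemma descended_F_lin a x y : wF P' (a *: x + y) = fsigma F a *: wF P' x + wF P' y.
Proof. by rewrite -hsig; exact: wF_lin. Qed.

Lemma descended_F1_lin a x y :
  W x -> W y -> wF1 P' (a *: x + y) = fsigma F a *: wF1 P' x + wF1 P' y.
Proof. by move=> hx hy; rewrite -hsig; apply: wF1_lin; exact: W_sub_wQ. Qed.

Lemma descended_F1_F a x : fI F a -> wF1 P' (a *: x) = fsigma1 F a *: wF P' x.
Proof. by move=> ha; rewrite wF1_F ?hsig1 //; exact: hinc. Qed.

Lemma descended_decomp : exists L T, normal_dec (fI F) W L T.
Proof.
have [n [i [r [hi [hr hri]]]]] := wP_fgproj P'.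
have [L' [T' hLT']] := wdecomp P'.
have hrad a : fI F' a -> in_jacobson a.
  by move=> ha; have := frad 0 ha; rewrite mulr0 addr0.
exact: (lift_normal_dec hi hr hri (fI_ideal F') hrad hLT' hQW hW hW' hIW hsum hcap).
Qed.

Let F1_image y := exists q, W q /\ y = wF1 P' q.
Let F1_span := ideal_mul (fun _ : S => True) F1_image.
Let hF1_span := ideal_mul_submod F1_image (@is_ideal_total S).

Lemma F1_span_wF y : F1_span (wF P' y).
Proof.
have [n [c [x [hx hs]]]] := fgen F.
rewrite -[wF P' y]scale1r -hs scaler_suml; apply: (submod_sum hF1_span) => k.
rewrite -scalerA -descended_F1_F //; apply: ideal_mul_gen => //.
by exists (x k *: y); split=> //; apply: hIW; exact: ideal_mul_gen.
Qed.

Lemma F1_span_wF1 q : wQ P' q -> F1_span (wF1 P' q).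
Proof.
move=> /hQW [w [z [hw [hz ->]]]].
rewrite (wF1D (W_sub_wQ hw) (wQ_ideal_span hz)); apply: (submodD hF1_span).
  by rewrite -[wF1 P' w]scale1r; apply: ideal_mul_gen => //; exists w.
have /ideal_spanP [m [a [t [ha ->]]]] := hz.
rewrite wF1_ideal_span //; apply: (submod_sum hF1_span) => k.
by apply: (submodZ hF1_span); exact: F1_span_wF.
Qed.

Lemma descended_F1_gen x : exists (m : nat) (c : 'I_m -> S) (q : 'I_m -> wP P'),
  (forall k, W (q k)) /\ x = \sum_(k < m) c k *: wF1 P' (q k).
Proof.
have [m [c [q [hq ->]]]] := wF1_gen x.
have : F1_span (\sum_k c k *: wF1 P' (q k)).
  by apply: (submod_sum hF1_span) => k; apply: (submodZ hF1_span); exact: F1_span_wF1.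
move=> [l [a [t [ht ->]]]].
have [q' hq'] := functional_choice _ (fun k => (ht k).2).
exists l, a, q'; split; first by move=> k; case: (hq' k).
by apply: eq_bigr => k _; case: (hq' k) => _ ->.
Qed.

Definition descended_window : window F :=
  @Window S p F (wP P') W (wF P') (wF1 P') (wP_fgproj P') descended_F_lin descended_F1_lin
    descended_decomp descended_F1_F descended_F1_gen.

Lemma descended_window_iso : iso_base_change (id : wP descended_window -> wP P').
Proof.
split; first by split; [exact: slin_id | split; [exact: W_sub_wQ | split]].
by exists id; split; [exact: slin_id | do 2!split=> //].
Qed.

Lemma hodge_image_descended x : W x <-> hodge_image descended_window id x.
Proof.
split; first by move=> hx; exact: (in_add_ideal_mul hx).
by move=> [q [z [hq [hz ->]]]]; apply: (submodD hW) => //; exact: hIW.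
Qed.
End DescendedWindow.

Theorem lemma4p2 (S : comUnitRingType) (p : nat) (hp : prime p)
    (F F' : frame S p) (halpha : strict_id_hom F F') :
  quot_map_wd_surj (fI F) (fI F') /\
  (forall a, fI F a -> fI F' a) /\
  (forall P : window F, exists (P' : window F') (u : wP P -> wP P'),
      is_base_change P P' u) /\
  (forall (P : window F) (P' : window F') (u : wP P -> wP P'),
      is_base_change P P' u -> lifts_hodge (fI F) P' (hodge_image P u)) /\
  (forall (P1 P2 : window F) (P1' P2' : window F')
      (u1 : wP P1 -> wP P1') (u2 : wP P2 -> wP P2'),
      is_base_change P1 P1' u1 -> is_base_change P2 P2' u2 ->
      forall g : wP P1' -> wP P2', wmap g ->
        (pair_hom (hodge_image P1 u1) (hodge_image P2 u2) g <->
           exists f : wP P1 -> wP P2, wmap f /\ forall x, g (u1 x) = u2 (f x)) /\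
        (forall f1 f2 : wP P1 -> wP P2, wmap f1 -> wmap f2 ->
           (forall x, g (u1 x) = u2 (f1 x)) -> (forall x, g (u1 x) = u2 (f2 x)) ->
           forall x, f1 x = f2 x)) /\
  (forall (P' : window F') (W : wP P' -> Prop),
      lifts_hodge (fI F) P' W ->
      exists (P : window F) (u : wP P -> wP P'),
        is_base_change P P' u /\ forall x, W x <-> hodge_image P u x).
Proof.
have hinc := halpha.1.
split; first by split=> // s'; exists s'; rewrite subrr; exact: (ideal0 (fI_ideal F')).
split=> //; split.
  move=> P; have [P' [u hu]] := exists_iso_base_change halpha P.
  by exists P', u; exact: iso_base_changeW.
split.
  by move=> P P' u /(base_change_iso halpha); exact: hodge_image_lifts.
split.
  move=> P1 P2 P1' P2' u1 u2 /(base_change_iso halpha) h1 /(base_change_iso halpha) h2 g hg.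
  split; last by move=> f1 f2 _ _; exact: descent_unique.
  by split; [exact: descent_of_pair_hom | move=> [f [hf e]]; exact: pair_hom_of_descent hf e].
move=> P' W [hW [hIW [[W' [hW' [_ [hsum hcap]]]] hQW]]].
exists (descended_window halpha hW hIW hW' hsum hcap hQW), id.
split; first by apply: iso_base_changeW; exact: descended_window_iso.
exact: hodge_image_descended.
Qed.
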